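(* Pseudo-rotations are generic in $\overline{\mathcal{O}}^{\infty}(\mathbb{T}^2)$ and in $\overline{\mathcal{O}_\mu}^{\infty}(\mathbb{T}^2)$.
   Context: $\overline{\mathcal{O}}^{\infty}(\mathbb{T}^2)$ is the $C^\infty$-closure of $\{h\circ R_\theta\circ h^{-1}: h\in\mathrm{Diff}^\infty(\mathbb{T}^2),\theta\in\mathbb{T}^2\}$ where $R_\theta(x)=x+\theta$ on $\mathbb{T}^2=\mathbb{R}^2/\mathbb{Z}^2$, with the $C^\infty$ metric; $\overline{\mathcal{O}_\mu}^{\infty}(\mathbb{T}^2)$ is the same with $h$ area-preserving. Generic means holding on a countable intersection of open dense subsets. For $f$ a torus homeomorphism homotopic to the identity with lift $\tilde f$, its rotation set is $\rho(\tilde f)=\lim_{n\to\infty}\tilde f^n(D)/n$ (Hausdorff limit, $D$ a fundamental domain of $\mathbb{Z}^2$); $f$ is a pseudo-rotation if its rotation set is a single vector. *)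

(* Stdlib reals + Coquelicot.
   The torus T^2 = R^2/Z^2 is handled through lifts R^2 -> R^2. *)
From Stdlib Require Import Reals ZArith List.
From Coquelicot Require Import Coquelicot.
Open Scope R_scope.

Definition pt : Type := (R * R)%type.

Definition partial (b : bool) (g : pt -> R) : pt -> R :=
  fun p => if b then Derive (fun t => g (t, snd p)) (fst p)
           else Derive (fun t => g (fst p, t)) (snd p).

Definition iter_partial (l : list bool) (g : pt -> R) : pt -> R :=
  fold_right partial g l.

Definition partial_exists (b : bool) (g : pt -> R) (p : pt) : Prop :=
  if b then ex_derive (fun t => g (t, snd p)) (fst p)
  else ex_derive (fun t => g (fst p, t)) (snd p).

Definition smooth_fun (g : pt -> R) : Prop :=
  forall (l : list bool) (p : pt),
    continuous (iter_partial l g) p /\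
    forall b, partial_exists b (iter_partial l g) p.

Definition smooth_map (F : pt -> pt) : Prop :=
  smooth_fun (fun p => fst (F p)) /\ smooth_fun (fun p => snd (F p)).

(** [F] lifts a torus map homotopic to the identity: commutes with Z^2. *)
Definition commutes_Z2 (F : pt -> pt) : Prop :=
  forall (p : pt) (m n : Z),
    F (fst p + IZR m, snd p + IZR n) = (fst (F p) + IZR m, snd (F p) + IZR n).

Definition equivariant_Z2 (F : pt -> pt) : Prop :=
  exists a b c d : Z, forall (p : pt) (m n : Z),
    F (fst p + IZR m, snd p + IZR n) =
      (fst (F p) + IZR (a * m + b * n), snd (F p) + IZR (c * m + d * n)).

Definition diffeo_lift (H Hinv : pt -> pt) : Prop :=
  smooth_map H /\ smooth_map Hinv /\
  (forall p, H (Hinv p) = p) /\ (forall p, Hinv (H p) = p) /\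
  equivariant_Z2 H /\ equivariant_Z2 Hinv.

(** Ambient space: lifts of C^oo diffeomorphisms of T^2 homotopic to the identity. *)
Definition diff0 (F : pt -> pt) : Prop :=
  commutes_Z2 F /\ exists Finv, diffeo_lift F Finv.

Definition jacobian (H : pt -> pt) (p : pt) : R :=
  partial true (fun q => fst (H q)) p * partial false (fun q => snd (H q)) p
  - partial false (fun q => fst (H q)) p * partial true (fun q => snd (H q)) p.

Definition area_preserving (H : pt -> pt) : Prop :=
  forall p, Rabs (jacobian H p) = 1.

Definition conj_rotation (F : pt -> pt) : Prop :=
  exists (H Hinv : pt -> pt) (theta : pt), diffeo_lift H Hinv /\
    forall x, F x = H (fst (Hinv x) + fst theta, snd (Hinv x) + snd theta).

Definition conj_rotation_mu (F : pt -> pt) : Prop :=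
  exists (H Hinv : pt -> pt) (theta : pt), diffeo_lift H Hinv /\
    area_preserving H /\
    forall x, F x = H (fst (Hinv x) + fst theta, snd (Hinv x) + snd theta).

Definition frac (t : R) : R := t - IZR (Int_part t).
Definition distZ (t : R) : R := Rmin (frac t) (1 - frac t).
Definition torus_dist (a b : pt) : R :=
  Rmax (distZ (fst a - fst b)) (distZ (snd a - snd b)).

Definition Cnear (k : nat) (eps : R) (F G : pt -> pt) : Prop :=
  (forall x, torus_dist (F x) (G x) <= eps) /\
  forall (l : list bool), (1 <= length l <= k)%nat -> forall x,
    Rabs (iter_partial l (fun q => fst (F q)) x
          - iter_partial l (fun q => fst (G q)) x) <= eps /\
    Rabs (iter_partial l (fun q => snd (F q)) x
          - iter_partial l (fun q => snd (G q)) x) <= eps.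

Definition Copen (V : (pt -> pt) -> Prop) : Prop :=
  forall F, diff0 F -> V F ->
    exists (k : nat) (eps : R), 0 < eps /\
      forall G, diff0 G -> Cnear k eps F G -> V G.

Definition Cclosure (O : (pt -> pt) -> Prop) : (pt -> pt) -> Prop :=
  fun F => diff0 F /\
    forall (k : nat) (eps : R), 0 < eps -> exists G, O G /\ Cnear k eps F G.

(** [P] is generic in the (topological subspace) [Y]: it holds on a countable
    intersection of relatively open dense subsets of [Y]. *)
Definition generic_in (Y : (pt -> pt) -> Prop) (P : (pt -> pt) -> Prop) : Prop :=
  exists V : nat -> (pt -> pt) -> Prop,
    (forall n, Copen (V n)) /\
    (forall n F, Y F -> forall (k : nat) (eps : R), 0 < eps ->
        exists G, Y G /\ V n G /\ Cnear k eps F G) /\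
    (forall F, Y F -> (forall n, V n F) -> P F).

Definition euclid (a b : pt) : R :=
  sqrt ((fst a - fst b) ^ 2 + (snd a - snd b) ^ 2).

Definition hausdorff_cvg (A : nat -> pt -> Prop) (L : pt -> Prop) : Prop :=
  forall eps, 0 < eps -> exists N, forall n, (N <= n)%nat ->
    (forall y, A n y -> exists z, L z /\ euclid y z < eps) /\
    (forall z, L z -> exists y, A n y /\ euclid y z < eps).

Definition fund_dom (x : pt) : Prop :=
  0 <= fst x < 1 /\ 0 <= snd x < 1.

Definition rot_approx (F : pt -> pt) (n : nat) : pt -> Prop :=
  fun y => exists x, fund_dom x /\
    y = (fst (Nat.iter n F x) / INR n, snd (Nat.iter n F x) / INR n).

(** the rotation set (Hausdorff limit of F^n(D)/n) is a single vector *)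
Definition pseudo_rotation (F : pt -> pt) : Prop :=
  exists v : pt, hausdorff_cvg (rot_approx F) (fun z => z = v).

(* A conjugate G = h R_theta h^-1 has iterates G^m x = h (h^-1 x + m theta), and
   h is a linear map plus a bounded Z^2-periodic part, so the m-step
   displacements G^m x - x differ from point to point by a bound B independent
   of m.  A C^0-small perturbation of G agrees with G up to an integer
   translation, and over a fixed number m of steps its orbits shadow those of G;
   hence its m-step displacements still differ by at most B + 1 <= m/(n+1) once m
   is large.  This makes V_n, "every C^0-close map has m-step displacements of
   spread at most m/(n+1) for some m", an open set containing all conjugates of
   rotations, hence open and dense in their closure.  A map in every V_n has
   averaged displacements converging uniformly to a single vector, which is then
   its whole rotation set. *)

From Pilot Require Import Defs.
From Stdlib Require Import Reals ZArith List.
From Coquelicot Require Import Coquelicot.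
From Stdlib Require Import Lra Lia FunctionalExtensionality.
Open Scope R_scope.

Lemma frac_bounds t : 0 <= frac t < 1.
Proof. unfold frac. destruct (base_Int_part t). lra. Qed.

Lemma distZ_le t (z : Z) : distZ t <= Rabs (t - IZR z).
Proof.
  unfold distZ. pose proof (frac_bounds t) as Hf. unfold frac in *.
  destruct (Z_le_gt_dec z (Int_part t)) as [Hz|Hz].
  - apply IZR_le in Hz. eapply Rle_trans. apply Rmin_l. rewrite Rabs_right; lra.
  - assert (Hz' : (Int_part t + 1 <= z)%Z) by lia. apply IZR_le in Hz'.
    rewrite plus_IZR in Hz'. eapply Rle_trans. apply Rmin_r. rewrite Rabs_left; lra.
Qed.

Lemma distZ_attained t : exists z : Z, Rabs (t - IZR z) = distZ t.
Proof.
  unfold distZ. pose proof (frac_bounds t) as Hf. unfold frac in *.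
  destruct (Rle_dec (t - IZR (Int_part t)) (1 - (t - IZR (Int_part t)))).
  - exists (Int_part t). rewrite Rmin_left by lra. rewrite Rabs_right; lra.
  - exists (Int_part t + 1)%Z. rewrite Rmin_right, plus_IZR by lra. rewrite Rabs_left; lra.
Qed.

Lemma distZ_0 : distZ 0 = 0.
Proof.
  apply Rle_antisym.
  - pose proof (distZ_le 0 0). rewrite Rminus_0_r, Rabs_R0 in H. exact H.
  - destruct (distZ_attained 0) as [z <-]. apply Rabs_pos.
Qed.

Lemma distZ_triangle s t : distZ (s + t) <= distZ s + distZ t.
Proof.
  destruct (distZ_attained s) as [z1 <-], (distZ_attained t) as [z2 <-].
  eapply Rle_trans. apply (distZ_le _ (z1 + z2)). rewrite plus_IZR.
  replace (s + t - (IZR z1 + IZR z2)) with ((s - IZR z1) + (t - IZR z2)) by ring.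
  apply Rabs_triang.
Qed.

Lemma distZ_half_integer (c : Z) : 1/2 <= distZ (IZR c + 1/2).
Proof.
  destruct (distZ_attained (IZR c + 1/2)) as [z <-].
  destruct (Z_le_gt_dec z c) as [H|H].
  - apply IZR_le in H. rewrite Rabs_right; lra.
  - assert (H' : (c + 1 <= z)%Z) by lia. apply IZR_le in H'. rewrite plus_IZR in H'.
    rewrite Rabs_left; lra.
Qed.

Lemma torus_dist_triangle a b c : torus_dist a c <= torus_dist a b + torus_dist b c.
Proof.
  unfold torus_dist. apply Rmax_lub.
  - replace (fst a - fst c) with ((fst a - fst b) + (fst b - fst c)) by ring.
    eapply Rle_trans. apply distZ_triangle. apply Rplus_le_compat; apply Rmax_l.
  - replace (snd a - snd c) with ((snd a - snd b) + (snd b - snd c)) by ring.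
    eapply Rle_trans. apply distZ_triangle. apply Rplus_le_compat; apply Rmax_r.
Qed.

Lemma Cnear_triangle k d1 d2 F G K :
  Cnear k d1 F G -> Cnear k d2 G K -> Cnear k (d1 + d2) F K.
Proof.
  intros [A1 B1] [A2 B2]. split.
  - intros x. eapply Rle_trans. apply torus_dist_triangle with (b := G x).
    apply Rplus_le_compat; auto.
  - intros l Hl x. destruct (B1 l Hl x) as [C1 D1], (B2 l Hl x) as [C2 D2].
    split.
    + eapply Rle_trans. 2: apply (Rplus_le_compat _ _ _ _ C1 C2).
      eapply Rle_trans. 2: apply Rabs_triang. right. f_equal. ring.
    + eapply Rle_trans. 2: apply (Rplus_le_compat _ _ _ _ D1 D2).
      eapply Rle_trans. 2: apply Rabs_triang. right. f_equal. ring.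
Qed.

Lemma Cnear_refl k d F : 0 <= d -> Cnear k d F F.
Proof.
  intros Hd. split.
  - intros x. unfold torus_dist. rewrite !Rminus_diag, distZ_0, Rmax_left; lra.
  - intros l Hl x. rewrite !Rminus_diag, Rabs_R0. lra.
Qed.

Lemma partial_ext b (g h : pt -> R) : (forall p, g p = h p) ->
  forall p, partial b g p = partial b h p.
Proof. intros E p. unfold partial. destruct b; apply Derive_ext; intros; apply E. Qed.

Lemma smooth_partial b g : smooth_fun g -> smooth_fun (partial b g).
Proof.
  intros Hg l p. specialize (Hg (l ++ b :: nil) p).
  unfold iter_partial in *. rewrite fold_right_app in Hg. exact Hg.
Qed.

Lemma smooth_continuous g p : smooth_fun g -> continuous g p.
Proof. intros H. exact (proj1 (H nil p)). Qed.

Definition has_partial (b : bool) (g : pt -> R) (p : pt) (l : R) : Prop :=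
  if b then is_derive (fun t => g (t, snd p)) (fst p) l
  else is_derive (fun t => g (fst p, t)) (snd p) l.

Lemma has_partial_partial b g p l :
  has_partial b g p l -> partial_exists b g p /\ partial b g p = l.
Proof.
  unfold has_partial, partial_exists, partial.
  destruct b; intros H; split; try (eexists; exact H); apply is_derive_unique; auto.
Qed.

Lemma smooth_has_partial b g p : smooth_fun g -> has_partial b g p (partial b g p).
Proof.
  intros H. pose proof (proj2 (H nil p) b) as D. simpl in D.
  unfold has_partial, partial_exists, partial in *. destruct b; apply Derive_correct, D.
Qed.

Lemma has_partial_const b c p : has_partial b (fun _ => c) p 0.
Proof. destruct b; apply (is_derive_const c). Qed.

Lemma has_partial_plus b f g p lf lg :
  has_partial b f p lf -> has_partial b g p lg ->
  has_partial b (fun q => f q + g q) p (lf + lg).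
Proof. destruct b; intros A B; apply (is_derive_plus _ _ _ _ _ A B). Qed.

Lemma has_partial_mult b f g p lf lg :
  has_partial b f p lf -> has_partial b g p lg ->
  has_partial b (fun q => f q * g q) p (lf * g p + f p * lg).
Proof.
  destruct p as [x y].
  destruct b; intros A B; apply (is_derive_mult _ _ _ _ _ A B); intros; apply Rmult_comm.
Qed.

Lemma smooth_differentiable f x y : smooth_fun f ->
  differentiable_pt_lim (fun a b => f (a, b)) x y
    (partial true f (x, y)) (partial false f (x, y)).
Proof.
  intros H. apply filterdiff_differentiable_pt_lim.
  eapply filterdiff_ext_lin.
  - apply (is_derive_filterdiff (fun a b => f (a, b)) x y (fun a b => partial true f (a, b))).
    + apply filter_forall. intros [u v]. apply (smooth_has_partial true f (u, v) H).
    + apply (smooth_has_partial false f (x, y) H).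
    + eapply continuous_ext. 2: apply (smooth_continuous _ (x, y) (smooth_partial true f H)).
      intros [u v]; reflexivity.
  - intros [u v]. reflexivity.
Qed.

Lemma has_partial_comp b f u v p lu lv : smooth_fun f ->
  has_partial b u p lu -> has_partial b v p lv ->
  has_partial b (fun q => f (u q, v q)) p
    (partial true f (u p, v p) * lu + partial false f (u p, v p) * lv).
Proof.
  intros Hf Hu Hv. destruct p as [x y].
  destruct b; apply is_derive_Reals;
    apply (derivable_pt_lim_comp_2d (fun a c => f (a, c)));
    try apply smooth_differentiable; try apply is_derive_Reals; auto.
Qed.

(* The class is closed under first partial derivatives (chain rule), which is
   all that is needed to see that its members are smooth. *)
Inductive smooth_expr : (pt -> R) -> Prop :=
| smooth_expr_fun f : smooth_fun f -> smooth_expr f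
| smooth_expr_const c : smooth_expr (fun _ => c)
| smooth_expr_plus f g : smooth_expr f -> smooth_expr g -> smooth_expr (fun p => f p + g p)
| smooth_expr_mult f g : smooth_expr f -> smooth_expr g -> smooth_expr (fun p => f p * g p)
| smooth_expr_comp f u v : smooth_fun f -> smooth_expr u -> smooth_expr v ->
    smooth_expr (fun p => f (u p, v p)).

Lemma smooth_expr_continuous g p : smooth_expr g -> continuous g p.
Proof.
  intros Eg. revert p.
  induction Eg as [f Hf|c|f g _ Cf _ Cg|f g _ Cf _ Cg|f u v Hf _ Cu _ Cv]; intros p.
  - apply smooth_continuous, Hf.
  - apply continuous_const.
  - apply (continuous_plus f g); auto.
  - apply (continuous_mult f g); auto.
  - apply (continuous_comp_2 u v (fun a b => f (a, b))); auto.
    eapply continuous_ext. 2: apply (smooth_continuous f (u p, v p) Hf).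
    intros [a c]; reflexivity.
Qed.

Lemma smooth_expr_has_partial g b : smooth_expr g ->
  exists g', smooth_expr g' /\ forall p, has_partial b g p (g' p).
Proof.
  induction 1 as [f Hf|c|f g _ [f' [Ef' Hf']] _ [g' [Eg' Hg']]
                 |f g Ef [f' [Ef' Hf']] Eg [g' [Eg' Hg']]
                 |f u v Hf Eu [u' [Eu' Hu']] Ev [v' [Ev' Hv']]].
  - exists (partial b f). split.
    + apply smooth_expr_fun, smooth_partial, Hf.
    + intros p. apply smooth_has_partial, Hf.
  - exists (fun _ => 0). split; [apply smooth_expr_const|intros; apply has_partial_const].
  - exists (fun p => f' p + g' p). split; [apply smooth_expr_plus; auto|].
    intros p. apply has_partial_plus; auto.
  - exists (fun p => f' p * g p + f p * g' p).
    split; [apply smooth_expr_plus; apply smooth_expr_mult; auto|].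
    intros p. apply has_partial_mult; auto.
  - exists (fun p => partial true f (u p, v p) * u' p + partial false f (u p, v p) * v' p).
    split.
    + apply smooth_expr_plus; apply smooth_expr_mult; auto;
        apply smooth_expr_comp; auto; apply smooth_partial, Hf.
    + intros p. apply has_partial_comp; auto.
Qed.

Lemma smooth_expr_smooth g : smooth_expr g -> smooth_fun g.
Proof.
  intros Eg.
  assert (Iter : forall l, exists g', smooth_expr g' /\ forall p, iter_partial l g p = g' p).
  { induction l as [|b l [g' [Eg' Hg']]]; [exists g; split; auto|].
    destruct (smooth_expr_has_partial g' b Eg') as [g'' [Eg'' Hg'']].
    exists g''. split; auto. intros p. simpl.
    rewrite (partial_ext b _ _ Hg'). apply has_partial_partial, Hg''. }
  intros l p. destruct (Iter l) as [g' [Eg' Hg']]. split.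
  - eapply continuous_ext. 2: apply (smooth_expr_continuous g' p Eg').
    intros; symmetry; auto.
  - intros b. destruct (smooth_expr_has_partial g' b Eg') as [g'' [_ Hg'']].
    destruct (has_partial_partial _ _ _ _ (Hg'' p)) as [Ex _].
    unfold partial_exists in *. destruct b; eapply ex_derive_ext; try exact Ex;
      intros; symmetry; apply Hg'.
Qed.

Definition conj_rot (H Hinv : pt -> pt) (t : pt) : pt -> pt :=
  fun x => H (fst (Hinv x) + fst t, snd (Hinv x) + snd t).

Lemma conj_rotation_conj_rot F : conj_rotation F ->
  exists H Hinv t, diffeo_lift H Hinv /\ F = conj_rot H Hinv t.
Proof.
  intros [H [Hinv [t [D E]]]]. exists H, Hinv, t. split; auto.
  apply functional_extensionality, E.
Qed.

Lemma conj_rot_smooth H Hinv t :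
  smooth_map H -> smooth_map Hinv -> smooth_map (conj_rot H Hinv t).
Proof.
  intros [H1 H2] [I1 I2].
  assert (Eu : smooth_expr (fun x => fst (Hinv x) + fst t))
    by (apply smooth_expr_plus; [apply smooth_expr_fun; auto|apply smooth_expr_const]).
  assert (Ev : smooth_expr (fun x => snd (Hinv x) + snd t))
    by (apply smooth_expr_plus; [apply smooth_expr_fun; auto|apply smooth_expr_const]).
  split; apply smooth_expr_smooth;
    [apply (smooth_expr_comp (fun q => fst (H q)))|apply (smooth_expr_comp (fun q => snd (H q)))];
    auto.
Qed.

(* H and Hinv induce mutually inverse matrices on Z^2, so translations by Z^2
   pass through the conjugacy unchanged. *)
Lemma conj_rot_commutes H Hinv t : diffeo_lift H Hinv -> commutes_Z2 (conj_rot H Hinv t).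
Proof.
  intros (_ & _ & HH & _ & [a [b [c [d Ha]]]] & [a' [b' [c' [d' Hb]]]]) p m n.
  unfold conj_rot. rewrite Hb.
  set (M := (a' * m + b' * n)%Z). set (N := (c' * m + d' * n)%Z).
  assert (Key := HH (fst p + IZR m, snd p + IZR n)).
  rewrite Hb in Key. fold M N in Key. rewrite Ha, HH in Key.
  injection Key as K1 K2.
  assert (E1 : IZR (a * M + b * N) = IZR m) by lra.
  assert (E2 : IZR (c * M + d * N) = IZR n) by lra.
  simpl. rewrite <- E1, <- E2, <- Ha. simpl. f_equal. apply injective_projections; simpl; ring.
Qed.

Lemma commutes_equivariant F : commutes_Z2 F -> equivariant_Z2 F.
Proof.
  intros HF. exists 1%Z, 0%Z, 0%Z, 1%Z. intros p m n. rewrite HF.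
  f_equal; f_equal; f_equal; lia.
Qed.

Lemma conj_rot_opp_r H Hinv t x : diffeo_lift H Hinv ->
  conj_rot H Hinv t (conj_rot H Hinv (- fst t, - snd t) x) = x.
Proof.
  intros (_ & _ & HH & HH' & _). unfold conj_rot. rewrite HH'. simpl.
  transitivity (H (Hinv x)); [|apply HH]. f_equal. apply injective_projections; simpl; ring.
Qed.

Lemma conj_rot_diff0 H Hinv t : diffeo_lift H Hinv -> Defs.diff0 (conj_rot H Hinv t).
Proof.
  intros D. pose proof D as (S1 & S2 & _).
  split; [apply conj_rot_commutes, D|].
  exists (conj_rot H Hinv (- fst t, - snd t)).
  split; [apply conj_rot_smooth; auto|].
  split; [apply conj_rot_smooth; auto|].
  split; [intros p; apply conj_rot_opp_r, D|].
  split.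
  - intros p. pose proof (conj_rot_opp_r H Hinv (- fst t, - snd t) p D) as K.
    simpl in K. rewrite !Ropp_involutive in K. destruct t; exact K.
  - split; apply commutes_equivariant, conj_rot_commutes, D.
Qed.

Lemma conj_rot_iter H Hinv t j x : diffeo_lift H Hinv ->
  Nat.iter j (conj_rot H Hinv t) x =
    H (fst (Hinv x) + INR j * fst t, snd (Hinv x) + INR j * snd t).
Proof.
  intros (_ & _ & HH & HH' & _). induction j.
  - simpl. rewrite !Rmult_0_l, !Rplus_0_r, <- surjective_pairing, HH. reflexivity.
  - simpl Nat.iter. rewrite IHj, S_INR. unfold conj_rot. rewrite HH'. simpl.
    f_equal. apply injective_projections; simpl; ring.
Qed.

Definition coord (b : bool) (p : pt) : R := if b then fst p else snd p.

Definition box_close (eta : R) (a c : pt) : Prop :=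
  forall b, Rabs (coord b a - coord b c) < eta.

Definition box_uniformly_continuous (F : pt -> pt) : Prop :=
  forall eta, 0 < eta -> exists rho, 0 < rho /\
    forall a c, box_close rho a c -> box_close eta (F a) (F c).

Definition continuous_map (F : pt -> pt) : Prop :=
  forall b x, continuous (fun y => coord b (F y)) x.

Definition Z2_periodic (g : pt -> R) : Prop :=
  forall p m n, g (fst p + IZR m, snd p + IZR n) = g p.

Lemma smooth_map_continuous_map F : smooth_map F -> continuous_map F.
Proof. intros [S1 S2] b x. destruct b; apply smooth_continuous; auto. Qed.

Lemma diff0_continuous_map F : Defs.diff0 F -> continuous_map F.
Proof. intros [_ [Finv [S _]]]. apply smooth_map_continuous_map, S. Qed.

Lemma continuous_coord b x : continuous (coord b) x.
Proof. destruct b; [apply continuous_fst|apply continuous_snd]. Qed.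

Lemma continuous_minus (f g : pt -> R) x :
  continuous f x -> continuous g x -> continuous (fun y => f y - g y) x.
Proof. intros A B. apply (continuous_plus f (fun y => - g y)); auto. apply (continuous_opp g), B. Qed.

Lemma shift_into_unit_interval (r : R) : exists m : Z, 0 <= r + IZR m < 1.
Proof. exists (- Int_part r)%Z. rewrite opp_IZR. destruct (base_Int_part r). lra. Qed.

Lemma periodic_uniformly_continuous (g : pt -> R) : (forall p, continuous g p) -> Z2_periodic g ->
  forall eps, 0 < eps -> exists d, 0 < d /\
    forall a c, box_close d a c -> Rabs (g a - g c) < eps.
Proof.
  intros C P eps He.
  destruct (uniform_continuity_2d (fun u v => g (u, v)) (-1) 2 (-1) 2)
    with (eps := mkposreal eps He) as [delta Hd].
  { intros x y _ _. apply continuity_2d_pt_filterlim.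
    apply (continuous_ext g (fun z => g (fst z, snd z))); [intros [u v]; reflexivity|apply C]. }
  exists (Rmin delta 1). split; [apply Rmin_pos; [apply cond_pos|lra]|].
  intros a c Hac. pose proof (Hac true) as H1. pose proof (Hac false) as H2. simpl in H1, H2.
  apply Rabs_lt_between in H1. apply Rabs_lt_between in H2.
  destruct (shift_into_unit_interval (fst a)) as [m Hm].
  destruct (shift_into_unit_interval (snd a)) as [n Hn].
  pose proof (Rmin_l delta 1). pose proof (Rmin_r delta 1).
  rewrite <- (P a m n), <- (P c m n), Rabs_minus_sym.
  apply (Hd (fst a + IZR m) (snd a + IZR n) (fst c + IZR m) (snd c + IZR n));
    try split; try lra; apply Rabs_lt_between; lra.
Qed.

Lemma walk_increment_bound (g : pt -> R) d s :
  (forall a c, box_close d a c -> Rabs (g a - g c) < 1) -> (forall b, Rabs (coord b s) < d) ->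
  forall k, Rabs (g (INR k * fst s, INR k * snd s) - g (0, 0)) <= INR k.
Proof.
  intros U Hs. induction k.
  - simpl. rewrite !Rmult_0_l, Rminus_diag, Rabs_R0. lra.
  - rewrite S_INR.
    replace (g ((INR k + 1) * fst s, (INR k + 1) * snd s) - g (0, 0)) with
      ((g ((INR k + 1) * fst s, (INR k + 1) * snd s) - g (INR k * fst s, INR k * snd s))
       + (g (INR k * fst s, INR k * snd s) - g (0, 0))) by ring.
    eapply Rle_trans; [apply Rabs_triang|].
    enough (Rabs (g ((INR k + 1) * fst s, (INR k + 1) * snd s)
                  - g (INR k * fst s, INR k * snd s)) < 1) by lra.
    apply U. intros b. replace (coord b _ - coord b _) with (coord b s)
      by (destruct b; simpl; ring). apply Hs.
Qed.

(* Every point of [0,1)^2 is reached from 0 in N steps of size < d. *)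
Lemma periodic_bounded (g : pt -> R) : (forall p, continuous g p) -> Z2_periodic g ->
  exists B, forall p, Rabs (g p) <= B.
Proof.
  intros C P. destruct (periodic_uniformly_continuous g C P 1 Rlt_0_1) as [d [Hd U]].
  destruct (INR_unbounded (/ d)) as [N HN].
  assert (HN0 : 0 < INR N) by (pose proof (Rinv_0_lt_compat d Hd); lra).
  assert (HNd : / INR N < d).
  { rewrite <- (Rinv_inv d). apply Rinv_lt_contravar; [|lra].
    apply Rmult_lt_0_compat; [apply Rinv_0_lt_compat|]; lra. }
  exists (Rabs (g (0, 0)) + INR N). intros p.
  destruct (shift_into_unit_interval (fst p)) as [m Hm].
  destruct (shift_into_unit_interval (snd p)) as [n Hn].
  rewrite <- (P p m n).
  set (s := ((fst p + IZR m) / INR N, (snd p + IZR n) / INR N)).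
  assert (Small : forall r, 0 <= r < 1 -> Rabs (r / INR N) < d).
  { intros r Hr. rewrite Rabs_right.
    - apply Rle_lt_trans with (1 / INR N); [|lra].
      apply Rmult_le_compat_r; [left; apply Rinv_0_lt_compat|]; lra.
    - apply Rle_ge, Rdiv_le_0_compat; lra. }
  assert (Hs : forall b, Rabs (coord b s) < d) by (intros []; apply Small; auto).
  pose proof (walk_increment_bound g d s U Hs N) as Walk.
  replace (INR N * fst s, INR N * snd s) with (fst p + IZR m, snd p + IZR n) in Walk
    by (unfold s; simpl; f_equal; field; lra).
  pose proof (Rabs_triang_inv (g (fst p + IZR m, snd p + IZR n)) (g (0, 0))). lra.
Qed.

Lemma distZ_coord_le_torus_dist b a c : distZ (coord b a - coord b c) <= torus_dist a c.
Proof. destruct b; [apply Rmax_l|apply Rmax_r]. Qed.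

(* A continuous function that stays within dl < 1/2 of Z cannot jump between
   integers, by the intermediate value theorem along segments from the origin. *)
Lemma continuous_near_integers_offset (e : pt -> R) dl :
  (forall p, continuous e p) -> (forall p, distZ (e p) <= dl) -> dl < 1/2 ->
  exists z : Z, forall p, Rabs (e p - IZR z) <= dl.
Proof.
  intros C D Hdl. destruct (distZ_attained (e (0, 0))) as [z Hz]. exists z. intros p.
  destruct (distZ_attained (e p)) as [z' Hz'].
  destruct (Z.eq_dec z z') as [<-|Hne]; [rewrite Hz'; apply D|exfalso].
  set (phi := fun t => e (t * fst p, t * snd p)).
  assert (Cphi : forall t : R_UniformSpace, continuous phi t).
  { intros t. apply (continuous_comp_2 (fun t => t * fst p) (fun t => t * snd p) (fun a b => e (a, b))).
    - apply (continuous_mult (fun t : R => t) (fun _ => fst p)); [apply continuous_id|apply continuous_const].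
    - apply (continuous_mult (fun t : R => t) (fun _ => snd p)); [apply continuous_id|apply continuous_const].
    - eapply continuous_ext; [|apply C]. intros [a b]; reflexivity. }
  assert (P0 : phi 0 = e (0, 0)) by (unfold phi; rewrite !Rmult_0_l; auto).
  assert (P1 : phi 1 = e p) by (unfold phi; rewrite !Rmult_1_l; destruct p; auto).
  pose proof (D (0, 0)) as D0. pose proof (D p) as Dp.
  assert (A0 : Rabs (e (0, 0) - IZR z) <= dl) by lra.
  assert (Ap : Rabs (e p - IZR z') <= dl) by lra.
  apply Rabs_le_between in A0. apply Rabs_le_between in Ap.
  assert (Crossing : exists c : Z, Rmin (phi 0) (phi 1) <= IZR c + 1/2 <= Rmax (phi 0) (phi 1)).
  { destruct (Z_lt_le_dec z z') as [Hlt|Hle].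
    - assert (Hz1 : (z + 1 <= z')%Z) by lia. apply IZR_le in Hz1. rewrite plus_IZR in Hz1.
      exists z. split; [eapply Rle_trans; [apply Rmin_l|lra]|eapply Rle_trans; [|apply Rmax_r]; lra].
    - assert (Hz1 : (z' + 1 <= z)%Z) by lia. apply IZR_le in Hz1. rewrite plus_IZR in Hz1.
      exists (z - 1)%Z. rewrite minus_IZR.
      split; [eapply Rle_trans; [apply Rmin_r|lra]|eapply Rle_trans; [|apply Rmax_l]; lra]. }
  destruct Crossing as [c Hc].
  destruct (IVT_gen_consistent phi 0 1 (IZR c + 1/2) Cphi Hc) as [t [_ Ht]].
  pose proof (distZ_half_integer c). pose proof (D (t * fst p, t * snd p)).
  unfold phi in Ht. rewrite Ht in *. lra.
Qed.

Lemma torus_close_integer_offset F G dl :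
  continuous_map F -> continuous_map G ->
  (forall x, torus_dist (F x) (G x) <= dl) -> dl < 1/2 ->
  exists z : bool -> Z, forall b x, Rabs (coord b (F x) - coord b (G x) - IZR (z b)) <= dl.
Proof.
  intros CF CG Hdist Hdl.
  assert (Offset : forall b, exists z : Z, forall x, Rabs (coord b (F x) - coord b (G x) - IZR z) <= dl).
  { intros b. apply continuous_near_integers_offset; auto.
    - intros x. apply continuous_minus; auto.
    - intros x. eapply Rle_trans; [apply distZ_coord_le_torus_dist|apply Hdist]. }
  destruct (Offset true) as [z1 H1], (Offset false) as [z2 H2].
  exists (fun b : bool => if b then z1 else z2). intros []; auto.
Qed.

Definition disp (F : pt -> pt) (b : bool) (N : nat) (x : pt) : R :=
  coord b (Nat.iter N F x) - coord b x.

Definition shift (z : bool -> Z) (k : nat) (p : pt) : pt :=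
  (fst p + INR k * IZR (z true), snd p + INR k * IZR (z false)).

Lemma shift_0 z p : shift z 0 p = p.
Proof. unfold shift. simpl. rewrite !Rmult_0_l, !Rplus_0_r. destruct p; reflexivity. Qed.

Lemma coord_shift b z k p : coord b (shift z k p) = coord b p + INR k * IZR (z b).
Proof. destruct b; reflexivity. Qed.

Lemma commutes_shift F z k p : commutes_Z2 F -> F (shift z k p) = shift z k (F p).
Proof. intros HF. unfold shift. rewrite !INR_IZR_INZ, <- !mult_IZR. apply HF. Qed.

Lemma commutes_disp_periodic F b : commutes_Z2 F -> Z2_periodic (disp F b 1).
Proof. intros HF p m n. unfold disp. simpl. rewrite HF. destruct b; simpl; ring. Qed.

Lemma continuous_disp1 F b : continuous_map F -> forall x, continuous (disp F b 1) x.
Proof. intros CF x. apply continuous_minus; [apply CF|apply continuous_coord]. Qed.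

Lemma bound_over_bool {A : Type} (f : bool -> A -> R) :
  (forall b, exists B, forall a, f b a <= B) -> exists B, forall b a, f b a <= B.
Proof.
  intros Hf. destruct (Hf true) as [B1 H1], (Hf false) as [B2 H2].
  exists (Rmax B1 B2). intros [] a; eapply Rle_trans; [apply H1|apply Rmax_l|apply H2|apply Rmax_r].
Qed.

Lemma box_close_mono e1 e2 a c : e1 <= e2 -> box_close e1 a c -> box_close e2 a c.
Proof. intros He H b. specialize (H b). lra. Qed.

Lemma box_close_triangle e1 e2 a c d :
  box_close e1 a c -> box_close e2 c d -> box_close (e1 + e2) a d.
Proof.
  intros H1 H2 b. specialize (H1 b). specialize (H2 b).
  replace (coord b a - coord b d) with ((coord b a - coord b c) + (coord b c - coord b d)) by ring.
  eapply Rle_lt_trans; [apply Rabs_triang|lra].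
Qed.

Lemma commutes_disp_bounded F : commutes_Z2 F -> continuous_map F ->
  exists C, forall b x, Rabs (disp F b 1 x) <= C.
Proof.
  intros HF CF. apply (bound_over_bool (fun b x => Rabs (disp F b 1 x))). intros b.
  apply periodic_bounded; [apply continuous_disp1, CF|apply commutes_disp_periodic, HF].
Qed.

Lemma commutes_box_uniformly_continuous F : commutes_Z2 F -> continuous_map F ->
  box_uniformly_continuous F.
Proof.
  intros HF CF eta He.
  assert (Hd : forall b, exists d, 0 < d /\
            forall a c, box_close d a c -> Rabs (disp F b 1 a - disp F b 1 c) < eta / 2).
  { intros b. apply periodic_uniformly_continuous;
      [apply continuous_disp1, CF|apply commutes_disp_periodic, HF|lra]. }
  destruct (Hd true) as [d1 [Hd1 U1]], (Hd false) as [d2 [Hd2 U2]].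
  set (rho := Rmin (Rmin d1 d2) (eta / 2)).
  assert (R1 : rho <= d1) by (eapply Rle_trans; apply Rmin_l).
  assert (R2 : rho <= d2) by (eapply Rle_trans; [apply Rmin_l|apply Rmin_r]).
  assert (R3 : rho <= eta / 2) by apply Rmin_r.
  exists rho. split; [repeat apply Rmin_pos; lra|].
  intros a c Hac b.
  assert (Hdisp : Rabs (disp F b 1 a - disp F b 1 c) < eta / 2)
    by (destruct b; [apply U1|apply U2]; eapply box_close_mono; eauto).
  specialize (Hac b). unfold disp in Hdisp. simpl in Hdisp.
  replace (coord b (F a) - coord b (F c))
    with ((coord b (F a) - coord b a - (coord b (F c) - coord b c)) + (coord b a - coord b c)) by ring.
  eapply Rle_lt_trans; [apply Rabs_triang|lra].
Qed.

Lemma pseudo_orbit_shadowing G : box_uniformly_continuous G ->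
  forall m eta, 0 < eta -> exists dl, 0 < dl /\ forall z : nat -> pt,
    (forall j, box_close dl (z (S j)) (G (z j))) -> box_close eta (z m) (Nat.iter m G (z 0%nat)).
Proof.
  intros U. induction m as [|m IH]; intros eta He.
  - exists 1. split; [lra|]. intros z _ b. simpl. rewrite Rminus_diag, Rabs_R0. exact He.
  - destruct (U (eta / 2)) as [rho [Hr Hrho]]; [lra|].
    destruct (IH rho Hr) as [d [Hd Hz]].
    exists (Rmin d (eta / 2)). split; [apply Rmin_pos; lra|].
    intros z Hj.
    assert (Close : box_close rho (z m) (Nat.iter m G (z 0%nat))).
    { apply Hz. intros j. eapply box_close_mono; [apply Rmin_l|apply Hj]. }
    replace eta with (eta / 2 + eta / 2) by field. simpl.
    eapply box_close_triangle; [|apply Hrho, Close].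
    eapply box_close_mono; [apply Rmin_r|apply Hj].
Qed.

Lemma equivariant_periodic_part H b : equivariant_Z2 H ->
  exists la lc : R, Z2_periodic (fun q => coord b (H q) - (la * fst q + lc * snd q)).
Proof.
  intros [a [c [d [e Ha]]]].
  destruct b; [exists (IZR a), (IZR c)|exists (IZR d), (IZR e)];
    intros p m n; rewrite Ha; simpl; rewrite plus_IZR, !mult_IZR; ring.
Qed.

(* H is linear plus Z^2-periodic, and the linear part cancels in the double
   difference; the periodic part is bounded. *)
Lemma equivariant_increment_oscillation H b : equivariant_Z2 H -> continuous_map H ->
  exists B, forall u v s,
    Rabs ((coord b (H (fst u + fst s, snd u + snd s)) - coord b (H u))
          - (coord b (H (fst v + fst s, snd v + snd s)) - coord b (H v))) <= B.
Proof.
  intros HE CH.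
  destruct (equivariant_periodic_part H b HE) as [la [lc Per]].
  set (P := fun q => coord b (H q) - (la * fst q + lc * snd q)) in Per.
  assert (CP : forall q, continuous P q).
  { intros q. apply continuous_minus; [apply CH|].
    apply (continuous_plus (fun q : pt => la * fst q) (fun q : pt => lc * snd q));
      [apply (continuous_mult (fun _ : pt => la) (fun q : pt => fst q));
         [apply continuous_const|apply continuous_fst]
      |apply (continuous_mult (fun _ : pt => lc) (fun q : pt => snd q));
         [apply continuous_const|apply continuous_snd]]. }
  destruct (periodic_bounded P CP Per) as [B HB].
  exists (4 * B). intros u v s.
  pose proof (HB (fst u + fst s, snd u + snd s)) as B1. pose proof (HB u) as B2.
  pose proof (HB (fst v + fst s, snd v + snd s)) as B3. pose proof (HB v) as B4.
  unfold P in B1, B2, B3, B4. simpl in B1, B3.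
  apply Rabs_le_between in B1, B2, B3, B4. apply Rabs_le_between. lra.
Qed.

Lemma conj_rot_disp_oscillation H Hinv t : diffeo_lift H Hinv ->
  exists B, forall b m x y,
    Rabs (disp (conj_rot H Hinv t) b m x - disp (conj_rot H Hinv t) b m y) <= B.
Proof.
  intros D. pose proof D as (S1 & _ & HH & _ & HE & _).
  set (G := conj_rot H Hinv t).
  destruct (bound_over_bool (fun b (mxy : nat * pt * pt) =>
    Rabs (disp G b (fst (fst mxy)) (snd (fst mxy)) - disp G b (fst (fst mxy)) (snd mxy))))
    as [B HB].
  - intros b.
    destruct (equivariant_increment_oscillation H b HE (smooth_map_continuous_map H S1)) as [B HB].
    exists B. intros [[m x] y]. simpl. unfold G, disp. rewrite !conj_rot_iter by exact D.
    replace (coord b x) with (coord b (H (Hinv x))) by now rewrite HH.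
    replace (coord b y) with (coord b (H (Hinv y))) by now rewrite HH.
    exact (HB (Hinv x) (Hinv y) (INR m * fst t, INR m * snd t)).
  - exists B. intros b m x y. exact (HB b (m, x, y)).
Qed.

(* The m-step displacement varies by at most m/(n+1) over the plane, so every
   orbit has average drift within 1/(n+1) of a common vector. *)
Definition rotation_spread_le (n : nat) (F : pt -> pt) : Prop :=
  exists (m : nat) (C : R), (1 <= m)%nat /\
    (forall b x, Rabs (disp F b 1 x) <= C) /\
    (forall b x y, Rabs (disp F b m x - disp F b m y) <= INR m / INR (S n)).

Lemma disp_iter_add F b a c x :
  disp F b (a + c) x = disp F b a (Nat.iter c F x) + disp F b c x.
Proof. unfold disp. rewrite Nat.iter_add. ring. Qed.

Lemma disp_le_mul F b C : (forall x, Rabs (disp F b 1 x) <= C) ->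
  forall r x, Rabs (disp F b r x) <= INR r * C.
Proof.
  intros HC. induction r; intros x.
  - unfold disp. simpl. rewrite Rminus_diag, Rabs_R0. lra.
  - change (S r) with (1 + r)%nat. rewrite disp_iter_add, plus_INR.
    eapply Rle_trans; [apply Rabs_triang|].
    specialize (IHr x). specialize (HC (Nat.iter r F x)). simpl (INR 1). lra.
Qed.

Lemma disp_mul_oscillation F b m e :
  (forall x y, Rabs (disp F b m x - disp F b m y) <= e) ->
  forall q x, Rabs (disp F b (q * m) x - INR q * disp F b m (0, 0)) <= INR q * e.
Proof.
  intros He. induction q; intros x.
  - unfold disp. simpl. rewrite Rminus_diag, Rmult_0_l, Rminus_0_r, Rabs_R0. lra.
  - change (S q * m)%nat with (m + q * m)%nat. rewrite disp_iter_add, S_INR.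
    replace (disp F b m (Nat.iter (q * m) F x) + disp F b (q * m) x - (INR q + 1) * disp F b m (0, 0))
      with ((disp F b m (Nat.iter (q * m) F x) - disp F b m (0, 0))
            + (disp F b (q * m) x - INR q * disp F b m (0, 0))) by ring.
    eapply Rle_trans; [apply Rabs_triang|].
    specialize (IHq x). specialize (He (Nat.iter (q * m) F x) (0, 0)). lra.
Qed.

(* Divide N by m: the q full blocks drift by q*w*m up to q*m/(n+1), the
   remainder by a bounded amount. *)
Lemma rotation_spread_disp_linear n F : rotation_spread_le n F -> forall b,
  exists w K, 0 <= K /\ forall N x, Rabs (disp F b N x - INR N * w) <= K + INR N / INR (S n).
Proof.
  intros [m [C [Hm [HC HD]]]] b.
  assert (C0 : 0 <= C) by (eapply Rle_trans; [apply Rabs_pos|apply (HC b (0, 0))]).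
  assert (Hm0 : 0 < INR m) by (apply lt_0_INR; lia).
  assert (HSn : 0 < INR (S n)) by (apply lt_0_INR; lia).
  set (w := disp F b m (0, 0) / INR m).
  assert (Hw : Rabs (INR m * w) <= INR m * C).
  { unfold w. replace (INR m * (disp F b m (0, 0) / INR m)) with (disp F b m (0, 0)) by (field; lra).
    apply disp_le_mul, HC. }
  exists w, (2 * INR m * C). split; [apply Rmult_le_pos; lra|].
  intros N x.
  assert (HN : N = (N mod m + N / m * m)%nat) by (rewrite (Nat.div_mod N m) at 1; lia).
  set (q := (N / m)%nat) in *. set (r := (N mod m)%nat) in *.
  assert (HrR : INR r <= INR m) by (apply le_INR; pose proof (Nat.mod_upper_bound N m); lia).
  assert (HNR : INR N = INR r + INR q * INR m) by (rewrite HN, plus_INR, mult_INR; auto).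
  pose proof (disp_le_mul F b C (HC b) r (Nat.iter (q * m) F x)) as Rem.
  pose proof (disp_mul_oscillation F b m _ (HD b) q x) as Blocks.
  assert (Hrw : Rabs (INR r * w) <= INR m * C).
  { eapply Rle_trans; [|apply Hw]. rewrite !Rabs_mult, !(Rabs_pos_eq (INR _)) by apply pos_INR.
    apply Rmult_le_compat_r; [apply Rabs_pos|exact HrR]. }
  assert (Hq : INR q * (INR m / INR (S n)) <= INR N / INR (S n)).
  { unfold Rdiv. rewrite <- Rmult_assoc. apply Rmult_le_compat_r.
    - left; apply Rinv_0_lt_compat, HSn.
    - pose proof (pos_INR r). lra. }
  assert (Hrc : INR r * C <= INR m * C) by (apply Rmult_le_compat_r; auto).
  rewrite HN at 1. rewrite disp_iter_add.
  replace (disp F b r (Nat.iter (q * m) F x) + disp F b (q * m) x - INR N * w) with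
    (disp F b r (Nat.iter (q * m) F x) + (disp F b (q * m) x - INR q * disp F b m (0, 0)) - INR r * w)
    by (rewrite HNR; unfold w; field; lra).
  apply Rabs_le_between in Rem, Blocks, Hrw. apply Rabs_le_between. lra.
Qed.

Lemma inv_INR_S_lt eps : 0 < eps -> exists n : nat, / INR (S n) < eps.
Proof.
  intros He. destruct (INR_unbounded (/ eps)) as [n Hn]. exists n.
  rewrite S_INR, <- (Rinv_inv eps). apply Rinv_lt_contravar; [|lra].
  apply Rmult_lt_0_compat; [apply Rinv_0_lt_compat; auto|pose proof (pos_INR n); lra].
Qed.

Lemma eventually_div_INR_lt K eps : 0 <= K -> 0 < eps ->
  exists N0 : nat, (1 <= N0)%nat /\ forall N, (N0 <= N)%nat -> K / INR N < eps.
Proof.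
  intros HK He. destruct (inv_INR_S_lt (eps / (K + 1))) as [n Hn]; [apply Rdiv_lt_0_compat; lra|].
  exists (S n). split; [lia|]. intros N HN.
  assert (HS : INR (S n) <= INR N) by (apply le_INR; auto).
  assert (HS0 : 0 < INR (S n)) by (apply lt_0_INR; lia).
  apply Rle_lt_trans with ((K + 1) / INR (S n)).
  - unfold Rdiv. apply Rmult_le_compat; [lra|left; apply Rinv_0_lt_compat; lra|lra|].
    apply Rinv_le_contravar; auto.
  - apply Rmult_lt_reg_r with (/ (K + 1)); [apply Rinv_0_lt_compat; lra|].
    replace ((K + 1) / INR (S n) * / (K + 1)) with (/ INR (S n)) by (field; lra). exact Hn.
Qed.

Lemma rotation_spread_average_near n F b : rotation_spread_le n F ->
  exists w N1, forall N x, (N1 <= N)%nat -> Rabs (disp F b N x / INR N - w) < 2 / INR (S n).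
Proof.
  intros HF. destruct (rotation_spread_disp_linear n F HF b) as [w [K [K0 HK]]].
  assert (HSn : 0 < INR (S n)) by (apply lt_0_INR; lia).
  destruct (eventually_div_INR_lt K (/ INR (S n)) K0) as [N1 [HN1 Small]];
    [apply Rinv_0_lt_compat, HSn|].
  exists w, N1. intros N x HN.
  assert (HN0 : 0 < INR N) by (apply lt_0_INR; lia).
  specialize (Small N HN). specialize (HK N x).
  replace (disp F b N x / INR N - w) with ((disp F b N x - INR N * w) / INR N) by (field; lra).
  unfold Rdiv in *. rewrite Rabs_mult, Rabs_inv, (Rabs_pos_eq (INR N)) by lra.
  apply Rle_lt_trans with ((K + INR N * / INR (S n)) * / INR N).
  - apply Rmult_le_compat_r; [left; apply Rinv_0_lt_compat|]; lra.
  - rewrite Rmult_plus_distr_r, (Rmult_comm (INR N)), Rmult_assoc, Rinv_r, Rmult_1_r by lra. lra.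
Qed.

Lemma uniform_limit_of_near_constants {X : Type} (x0 : X) (f : nat -> X -> R) :
  (forall eps, 0 < eps -> exists w N1, forall N x, (N1 <= N)%nat -> Rabs (f N x - w) < eps) ->
  exists v, forall eps, 0 < eps -> exists N0, forall N x, (N0 <= N)%nat -> Rabs (f N x - v) < eps.
Proof.
  intros Near.
  assert (Cau : ex_lim_seq_cauchy (fun N => f N x0)).
  { intros eps. destruct (Near (eps / 2)) as [w [N1 HN1]]; [destruct eps; simpl; lra|].
    exists N1. intros N M HN HM.
    pose proof (HN1 N x0 HN). pose proof (HN1 M x0 HM).
    replace (f N x0 - f M x0) with ((f N x0 - w) - (f M x0 - w)) by ring.
    eapply Rle_lt_trans; [apply Rabs_triang|]. rewrite Rabs_Ropp. lra. }
  apply ex_lim_seq_cauchy_corr, Lim_seq_correct', is_lim_seq_Reals in Cau.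
  exists (real (Lim_seq (fun N => f N x0))). intros eps He.
  destruct (Near (eps / 4)) as [w [N1 HN1]]; [lra|].
  destruct (Cau (eps / 4)) as [N2 HN2]; [lra|].
  exists N1. intros N x HN.
  specialize (HN2 (max N1 N2) ltac:(lia)). unfold Rdist in HN2.
  pose proof (HN1 (max N1 N2) x0 ltac:(lia)). pose proof (HN1 N x HN).
  apply Rabs_lt_between in HN2, H, H0. apply Rabs_lt_between. lra.
Qed.

Lemma euclid_le_sum_Rabs a c : euclid a c <= Rabs (fst a - fst c) + Rabs (snd a - snd c).
Proof.
  unfold euclid. set (s := fst a - fst c). set (t := snd a - snd c).
  pose proof (Rabs_pos s). pose proof (Rabs_pos t).
  rewrite <- (sqrt_Rsqr (Rabs s + Rabs t)) by lra.
  apply sqrt_le_1_alt. unfold Rsqr. rewrite <- (pow2_abs s), <- (pow2_abs t). nra.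
Qed.

Lemma pseudo_rotation_of_uniform_average F v :
  (forall eps, 0 < eps -> exists N0, forall N x, (N0 <= N)%nat -> fund_dom x ->
     euclid (fst (Nat.iter N F x) / INR N, snd (Nat.iter N F x) / INR N) v < eps) ->
  pseudo_rotation F.
Proof.
  intros Cvg. exists v. intros eps He. destruct (Cvg eps He) as [N0 HN0].
  assert (D0 : fund_dom (0, 0)) by (unfold fund_dom; simpl; lra).
  exists N0. intros N HN. split.
  - intros y [x [Dx ->]]. exists v. split; auto.
  - intros z ->. eexists. split; [exists (0, 0); split; [exact D0|reflexivity]|auto].
Qed.

(* On the fundamental domain, F^N(x)/N and the average displacement differ by
   x/N, which is at most 1/N. *)
Lemma pseudo_rotation_of_rotation_spread F :
  (forall n, rotation_spread_le n F) -> pseudo_rotation F.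
Proof.
  intros HF.
  assert (Avg : forall b, exists v, forall eps, 0 < eps -> exists N0, forall N x,
            (N0 <= N)%nat -> Rabs (disp F b N x / INR N - v) < eps).
  { intros b. apply (uniform_limit_of_near_constants (0, 0)). intros eps He.
    destruct (inv_INR_S_lt (eps / 2)) as [n Hn]; [lra|].
    destruct (rotation_spread_average_near n F b (HF n)) as [w [N1 HN1]].
    exists w, N1. intros N x HN. specialize (HN1 N x HN). lra. }
  destruct (Avg true) as [v1 H1], (Avg false) as [v2 H2].
  apply (pseudo_rotation_of_uniform_average F (v1, v2)). intros eps He.
  destruct (H1 (eps / 4)) as [N1 HN1]; [lra|]. destruct (H2 (eps / 4)) as [N2 HN2]; [lra|].
  destruct (eventually_div_INR_lt 1 (eps / 4)) as [N3 [HN3 HN3']]; [lra|lra|].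
  exists (max N1 (max N2 N3)). intros N x HN [[D1 D2] [D3 D4]].
  assert (HN0 : 0 < INR N) by (apply lt_0_INR; lia).
  specialize (HN1 N x ltac:(lia)). specialize (HN2 N x ltac:(lia)). specialize (HN3' N ltac:(lia)).
  assert (Hx : forall r, 0 <= r < 1 -> Rabs (r / INR N) < eps / 4).
  { intros r Hr. rewrite Rabs_pos_eq by (apply Rdiv_le_0_compat; lra).
    apply Rle_lt_trans with (1 / INR N); [|exact HN3'].
    apply Rmult_le_compat_r; [left; apply Rinv_0_lt_compat|]; lra. }
  pose proof (Hx (fst x) (conj D1 D2)). pose proof (Hx (snd x) (conj D3 D4)).
  unfold disp, coord in HN1, HN2.
  eapply Rle_lt_trans; [apply euclid_le_sum_Rabs|]. simpl.
  replace (fst (Nat.iter N F x) / INR N - v1) with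
    ((fst (Nat.iter N F x) - fst x) / INR N - v1 + fst x / INR N) by (field; lra).
  replace (snd (Nat.iter N F x) / INR N - v2) with
    ((snd (Nat.iter N F x) - snd x) / INR N - v2 + snd x / INR N) by (field; lra).
  pose proof (Rabs_triang ((fst (Nat.iter N F x) - fst x) / INR N - v1) (fst x / INR N)).
  pose proof (Rabs_triang ((snd (Nat.iter N F x) - snd x) / INR N - v2) (snd x / INR N)).
  lra.
Qed.

Definition locally_spread_le (n : nat) (F : pt -> pt) : Prop :=
  exists (k : nat) (d : R), 0 < d /\
    forall G, Defs.diff0 G -> Cnear k d F G -> rotation_spread_le n G.

Lemma locally_spread_le_open n : Copen (locally_spread_le n).
Proof.
  intros F _ [k [d [Hd HV]]]. exists k, (d / 2). split; [lra|].
  intros G _ HFG. exists k, (d / 2). split; [lra|].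
  intros K HK HGK. apply HV; auto.
  replace d with (d / 2 + d / 2) by field. eapply Cnear_triangle; eauto.
Qed.

(* If G is G0 translated by -z up to dl, the orbit of G translated back by j z
   at time j is a dl-pseudo-orbit of G0. *)
Lemma shifted_orbit_pseudo_orbit G0 G z dl x : commutes_Z2 G0 ->
  (forall b y, Rabs (coord b (G0 y) - coord b (G y) - IZR (z b)) < dl) ->
  forall j, box_close dl (shift z (S j) (Nat.iter (S j) G x)) (G0 (shift z j (Nat.iter j G x))).
Proof.
  intros HG0 Hoff j b. rewrite commutes_shift by exact HG0.
  rewrite !coord_shift, S_INR. simpl Nat.iter.
  replace (coord b (G (Nat.iter j G x)) + (INR j + 1) * IZR (z b)
           - (coord b (G0 (Nat.iter j G x)) + INR j * IZR (z b)))
    with (- (coord b (G0 (Nat.iter j G x)) - coord b (G (Nat.iter j G x)) - IZR (z b))) by ring.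
  rewrite Rabs_Ropp. apply Hoff.
Qed.

Lemma shadowed_disp_oscillation G0 G z m b x y :
  box_close (1/2) (shift z m (Nat.iter m G x)) (Nat.iter m G0 x) ->
  box_close (1/2) (shift z m (Nat.iter m G y)) (Nat.iter m G0 y) ->
  Rabs (disp G b m x - disp G b m y) <= Rabs (disp G0 b m x - disp G0 b m y) + 1.
Proof.
  intros Hx Hy. specialize (Hx b). specialize (Hy b). rewrite coord_shift in Hx, Hy.
  apply Rabs_lt_between in Hx, Hy. unfold disp.
  pose proof (Rabs_triang_inv (coord b (Nat.iter m G x) - coord b x - (coord b (Nat.iter m G y) - coord b y))
                             (coord b (Nat.iter m G0 x) - coord b x - (coord b (Nat.iter m G0 y) - coord b y))).
  enough (Rabs (coord b (Nat.iter m G x) - coord b x - (coord b (Nat.iter m G y) - coord b y)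
               - (coord b (Nat.iter m G0 x) - coord b x - (coord b (Nat.iter m G0 y) - coord b y))) <= 1)
    by lra.
  apply Rabs_le_between. lra.
Qed.

Lemma exists_nat_div_INR_S_ge A n : exists m : nat, (1 <= m)%nat /\ A <= INR m / INR (S n).
Proof.
  assert (HSn : 0 < INR (S n)) by (apply lt_0_INR; lia).
  destruct (INR_unbounded (Rmax A 1 * INR (S n))) as [m Hm].
  pose proof (Rmax_l A 1). pose proof (Rmax_r A 1).
  exists m. split.
  - destruct m; [|lia]. change (INR 0) with 0 in Hm.
    pose proof (Rmult_lt_0_compat (Rmax A 1) (INR (S n))). lra.
  - apply Rmult_le_reg_r with (INR (S n)); [lra|].
    unfold Rdiv. rewrite Rmult_assoc, Rinv_l by lra. nra.
Qed.

(* A C^0-perturbation G of G0 is, up to an integer translation z, uniformly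
   close to G0; over the finitely many steps m its orbits shadow those of G0,
   so the m-step displacements of G oscillate by at most B + 1. *)
Lemma locally_spread_le_of_bounded_oscillation n G0 :
  commutes_Z2 G0 -> continuous_map G0 ->
  (exists B, forall b m x y, Rabs (disp G0 b m x - disp G0 b m y) <= B) ->
  locally_spread_le n G0.
Proof.
  intros HG0 CG0 [B HB].
  destruct (commutes_disp_bounded G0 HG0 CG0) as [C0 HC0].
  destruct (exists_nat_div_INR_S_ge (B + 1) n) as [m [Hm1 Hmn]].
  destruct (pseudo_orbit_shadowing G0 (commutes_box_uniformly_continuous G0 HG0 CG0) m (1/2))
    as [dl [Hdl Shadow]]; [lra|].
  set (del := Rmin (1/4) (dl/2)).
  assert (Hdel0 : 0 < del) by (apply Rmin_pos; lra).
  assert (Hdel1 : del <= 1/4) by apply Rmin_l.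
  assert (Hdel2 : del <= dl/2) by apply Rmin_r.
  exists 0%nat, del. split; [lra|].
  intros G HG [Hnear _].
  destruct (torus_close_integer_offset G0 G del CG0 (diff0_continuous_map G HG) Hnear)
    as [z Hz]; [lra|].
  exists m. destruct (bound_over_bool (fun b x => Rabs (disp G b 1 x))) as [C HC].
  { intros b. exists (C0 + Rabs (IZR (z b)) + 1). intros x.
    specialize (HC0 b x). specialize (Hz b x). unfold disp in *. simpl in HC0 |- *.
    pose proof (Rle_abs (IZR (z b))). pose proof (Rabs_maj2 (IZR (z b))).
    apply Rabs_le_between in HC0, Hz. apply Rabs_le_between. lra. }
  exists C. split; [exact Hm1|split; [exact HC|]].
  intros b x y.
  assert (Orbit : forall w, box_close (1/2) (shift z m (Nat.iter m G w)) (Nat.iter m G0 w)).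
  { intros w. rewrite <- (shift_0 z w) at 2.
    apply (Shadow (fun j => shift z j (Nat.iter j G w))).
    apply (shifted_orbit_pseudo_orbit G0 G z dl w HG0).
    intros b' y'. specialize (Hz b' y'). lra. }
  eapply Rle_trans; [apply (shadowed_disp_oscillation G0 G z m b x y (Orbit x) (Orbit y))|].
  specialize (HB b m x y). lra.
Qed.

Lemma conj_rotation_locally_spread_le n F : conj_rotation F -> locally_spread_le n F.
Proof.
  intros HF. destruct (conj_rotation_conj_rot F HF) as [H [Hinv [t [D ->]]]].
  apply locally_spread_le_of_bounded_oscillation.
  - apply conj_rot_commutes, D.
  - apply diff0_continuous_map, conj_rot_diff0, D.
  - apply conj_rot_disp_oscillation, D.
Qed.

Lemma pseudo_rotation_generic_in_closure (O : (pt -> pt) -> Prop) :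
  (forall F, O F -> conj_rotation F) -> generic_in (Cclosure O) pseudo_rotation.
Proof.
  intros HO. exists locally_spread_le. split; [apply locally_spread_le_open|split].
  - intros n F [_ Approx] k eps He. destruct (Approx k eps He) as [G [OG HG]].
    exists G. split; [|split; [apply conj_rotation_locally_spread_le, HO, OG|exact HG]].
    destruct (conj_rotation_conj_rot G (HO G OG)) as [H [Hinv [t [D ->]]]].
    split; [apply conj_rot_diff0, D|].
    intros k' e' He'. exists (conj_rot H Hinv t). split; [exact OG|apply Cnear_refl; lra].
  - intros F [HF _] Hloc. apply pseudo_rotation_of_rotation_spread. intros n.
    destruct (Hloc n) as [k [d [Hd HQ]]]. apply HQ; [exact HF|apply Cnear_refl; lra].
Qed.

Theorem mainTheorem3 :
  generic_in (Cclosure conj_rotation) pseudo_rotation /\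
  generic_in (Cclosure conj_rotation_mu) pseudo_rotation.
Proof.
  split; apply pseudo_rotation_generic_in_closure; auto.
  intros F [H [Hinv [t [D [_ E]]]]]. exists H, Hinv, t; auto.
Qed.
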